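(* Let $K$ be a field, $Q=(V,E,X,s,t,l)$ a labelled quiver and $\mathcal{R}=(\mathcal{V},\varphi)$ a representation of $Q$ over $K$ that is consistent with the labelling $l$. Let $u,v,w\in V$. Then for all $f\in K\langle X\rangle_{v,w}$ and $g\in K\langle X\rangle_{u,v}$ we have $fg\in K\langle X\rangle_{u,w}$ and $\varphi_{u,w}(fg)=\varphi_{v,w}(f)\cdot\varphi_{u,v}(g)$.
   Context: $K\langle X\rangle$ is the free algebra of noncommutative polynomials over $K$ in indeterminates $X$, with monomials the words in $\langle X\rangle$ (including the empty word $1$); $\operatorname{supp}(f)$ is the set of monomials with nonzero coefficient. A labelled quiver $Q=(V,E,X,s,t,l)$ has vertices $V$, edges $E$, source/target maps $s,t:E\to V$ and labelling $l:E\to X$. A nonempty path $p=e_n\cdots e_1$ (with $s(e_{i+1})=t(e_i)$) has label $l(e_n)\cdots l(e_1)$, source $s(e_1)$, target $t(e_n)$; each vertex $v$ has an empty path with label $1$ and source and target $v$. For a monomial $m$, $\sigma(m)=\{(s(p),t(p)) : p \text{ a path with } l(p)=m\}$; for a polynomial $f$, $\sigma(f)=\bigcap_{m\in\operatorname{supp}(f)}\sigma(m)$. $K\langle X\rangle_{v,w}=\{f : (v,w)\in\sigma(f)\}$. A representation $(\mathcal{V},\varphi)$ of $Q$ over $K$ assigns to each vertex $v$ a $K$-vector space $\mathcal{V}_v$ and to each edge $e$ a $K$-linear map $\varphi(e):\mathcal{V}_{s(e)}\to\mathcal{V}_{t(e)}$; it is consistent with $l$ if for any two nonempty paths $e_n\cdots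 e_1$ and $d_n\cdots d_1$ with the same source and target and equal labels, $\varphi(e_n)\cdots\varphi(e_1)=\varphi(d_n)\cdots\varphi(d_1)$. For $v,w\in V$, $\varphi_{v,w}:K\langle X\rangle_{v,w}\to L(\mathcal{V}_v,\mathcal{V}_w)$ is the (well-defined) $K$-linear map with $\varphi_{v,w}(l(e_n\cdots e_1))=\varphi(e_n)\cdots\varphi(e_1)$ for nonempty paths $e_n\cdots e_1$ from $v$ to $w$, and $\varphi_{v,v}(1)=\mathrm{id}_{\mathcal{V}_v}$. *)

From HB Require Import structures.
From mathcomp Require Import all_boot all_order all_algebra.
From mathcomp Require Import finmap.
From Stdlib Require Import ClassicalEpsilon.
Set Implicit Arguments. Unset Strict Implicit. Unset Printing Implicit Defensive.
Import GRing.Theory.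
Local Open Scope ring_scope.
Local Open Scope fset_scope.

(* Monomials = words over X, represented as seq X (written left to right);
   the empty word [::] is the monomial 1.  A noncommutative polynomial is a
   finitely supported function from words to K. *)
Definition ncpoly (K : fieldType) (X : choiceType) := {fsfun seq X -> K with 0}.

Definition ncsupp (K : fieldType) (X : choiceType) (f : ncpoly K X) : {fset seq X} :=
  finsupp f.

(* coefficient of the word m in f*g : sum over factorisations m = a ++ b *)
Definition ncmul_coef (K : fieldType) (X : choiceType) (f g : ncpoly K X)
  (m : seq X) : K :=
  \sum_(i < (size m).+1) f (take i m) * g (drop i m).

(* product in K<X> (concatenation of words, extended bilinearly) *)
Definition ncmul (K : fieldType) (X : choiceType) (f g : ncpoly K X) : ncpoly K X :=
  [fsfun m in [fset a ++ b | a in finsupp f, b in finsupp g] => ncmul_coef f g m | 0].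

Record lquiver (X : Type) := LQuiver {
  qV : eqType;
  qE : Type;
  qs : qE -> qV;
  qt : qE -> qV;
  ql : qE -> X
}.

(* A path e_n ... e_1 is represented by the list [:: e_n; ...; e_1]
   (written order).  [qwalk v w p] says that p is a path with source v and
   target w: for the empty list this means v = w (the empty path at v);
   for e :: p' it means t(e) = w and p' is a path from v to s(e). *)
Fixpoint qwalk X (Q : lquiver X) (v w : qV Q) (p : seq (qE Q)) : Prop :=
  match p with
  | [::] => v = w
  | e :: p' => qt e = w /\ qwalk v (qs e) p'
  end.

Definition qlabel X (Q : lquiver X) (p : seq (qE Q)) : seq X := map (@ql X Q) p.

Definition in_sigma_mono X (Q : lquiver X) (m : seq X) (v w : qV Q) : Prop :=
  exists p, qwalk v w p /\ qlabel p = m.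

(* f \in K<X>_{v,w}, i.e. (v,w) \in sigma(f) = \bigcap_{m in supp f} sigma(m) *)
Definition in_KXvw (K : fieldType) (X : choiceType) (Q : lquiver X)
  (v w : qV Q) (f : ncpoly K X) : Prop :=
  forall m, m \in ncsupp f -> in_sigma_mono m v w.

Section Rep.
Variables (K : fieldType) (X : choiceType) (Q : lquiver X).
Variable VS : qV Q -> lmodType K.
Variable phi : forall e : qE Q, {linear VS (qs e) -> VS (qt e)}.

Definition vtransport (a b : qV Q) (H : a = b) : VS a -> VS b :=
  match H in _ = b' return VS a -> VS b' with erefl => id end.

(* the map phi(e_n) ... phi(e_1) : V_v -> V_w of a path from v to w
   (identity for the empty path at v; the zero map if p is not a path
   from v to w) *)
Unset Implicit Arguments.
Fixpoint path_map (p : seq (qE Q)) (v w : qV Q) : VS v -> VS w :=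
  match p with
  | [::] => fun x => match @eqP _ v w with
                     | ReflectT H => vtransport H x
                     | ReflectF _ => 0
                     end
  | e :: p' => fun x => match @eqP _ (qt e) w with
                     | ReflectT H => vtransport H (phi e (path_map p' v (qs e) x))
                     | ReflectF _ => 0
                     end
  end.
Set Implicit Arguments.

Definition consistent : Prop :=
  forall (v w : qV Q) (p q : seq (qE Q)),
    p <> [::] -> q <> [::] ->
    qwalk v w p -> qwalk v w q -> qlabel p = qlabel q ->
    path_map p v w = path_map q v w.

(* the map associated to a monomial m in sigma^{-1}(v,w): the composite along
   some path from v to w labelled m (well defined by consistency) *)
Definition mono_map (v w : qV Q) (m : seq X) : VS v -> VS w :=
  path_map (epsilon (inhabits [::]) (fun p => qwalk v w p /\ qlabel p = m)) v w.

Definition phi_vw (v w : qV Q) (f : ncpoly K X) : VS v -> VS w :=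
  fun x => \sum_(m <- ncsupp f) f m *: @mono_map v w m x.

End Rep.

Arguments in_KXvw {K X Q} v w f.
Arguments phi_vw {K X Q VS} phi v w f _.
Arguments mono_map {K X Q VS} phi v w m _.
Arguments consistent {K X Q VS} phi.

(* The coefficient of a word m in fg collects the products f(a) g(b) over the
   splittings m = ab, so phi_{u,w}(fg) is the sum of f(a) g(b) phi_{u,w}(ab).
   If a labels a path from v to w and b one from u to v, the concatenated path
   is labelled ab, and by consistency phi_{u,w}(ab) may be computed along it;
   it is then the composite phi_{v,w}(a) phi_{u,v}(b), and bilinearity gives
   the product formula. *)
From Pilot Require Import Defs.
From HB Require Import structures.
From mathcomp Require Import all_boot all_order all_algebra.
From mathcomp Require Import finmap.
From Stdlib Require Import ClassicalEpsilon FunctionalExtensionality.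
Set Implicit Arguments. Unset Strict Implicit. Unset Printing Implicit Defensive.
Import GRing.Theory.
Local Open Scope ring_scope.

Section Splittings.
Variable T : eqType.

Definition splits (m : seq T) : seq (seq T * seq T) :=
  [seq (take i m, drop i m) | i <- iota 0 (size m).+1].

Lemma mem_splits (m a b : seq T) : ((a, b) \in splits m) = (a ++ b == m).
Proof.
apply/mapP/eqP => [[i _ [-> ->]] | <-]; first exact: cat_take_drop.
exists (size a); first by rewrite mem_iota size_cat ltnS leq_addr.
by rewrite take_size_cat // drop_size_cat.
Qed.

Lemma uniq_splits (m : seq T) : uniq (splits m).
Proof.
rewrite map_inj_in_uniq ?iota_uniq // => i j.
rewrite !mem_iota !ltnS => /andP[_ le_i] /andP[_ le_j] [eq_take _].
by move: (congr1 size eq_take); rewrite !size_take_min !(minn_idPl _).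
Qed.

Lemma sum_splits (V : nmodType) (S : seq (seq T)) (R : seq (seq T * seq T))
    (h : seq T * seq T -> V) :
  uniq S -> uniq R -> (forall p, p \in R -> p.1 ++ p.2 \in S) ->
  (forall p, p \notin R -> h p = 0) ->
  \sum_(m <- S) \sum_(p <- splits m) h p = \sum_(p <- R) h p.
Proof.
move=> uS uR RS h0.
have splitsR m : \sum_(p <- splits m) h p = \sum_(p <- R | m == p.1 ++ p.2) h p.
  rewrite (bigID (mem R)) /= [X in _ + X]big1 ?addr0; last by move=> p /h0.
  rewrite -[LHS]big_filter -[RHS]big_filter; apply/perm_big/uniq_perm.
  - exact/filter_uniq/uniq_splits.
  - exact: filter_uniq.
  by case=> a b; rewrite !mem_filter mem_splits eq_sym andbC.
under eq_bigr do rewrite splitsR big_mkcond.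
rewrite exchange_big; apply: eq_big_seq => p pR.
by rewrite -big_mkcond -big_filter filter_pred1_uniq ?RS // big_seq1.
Qed.

End Splittings.

Section FreeAlgebra.
Variables (K : fieldType) (X : choiceType).
Implicit Types f g : ncpoly K X.

Lemma ncmul_coefE f g (m : seq X) :
  ncmul_coef f g m = \sum_(p <- splits m) f p.1 * g p.2.
Proof. by rewrite big_map -val_enum_ord big_map enumT. Qed.

Lemma finsupp_ncmul f g :
  (finsupp (ncmul f g) `<=` [fset a ++ b | a in finsupp f, b in finsupp g])%fset.
Proof. exact: finsupp_sub. Qed.

Lemma sum_ncmul (V : lmodType K) f g (F : seq X -> V) :
  \sum_(m <- finsupp (ncmul f g)) ncmul f g m *: F m =
  \sum_(a <- finsupp f) \sum_(b <- finsupp g) (f a * g b) *: F (a ++ b).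
Proof.
set S := [fset a ++ b | a in finsupp f, b in finsupp g]%fset.
rewrite (big_fset_incl _ (finsupp_ncmul f g)); last first.
  by move=> m _; rewrite memNfinsupp => /eqP ->; rewrite scale0r.
transitivity (\sum_(m <- S) \sum_(p <- splits m) (f p.1 * g p.2) *: F (p.1 ++ p.2)).
  apply: eq_big_seq => m mS; rewrite fsfunE mS ncmul_coefE scaler_suml.
  by apply: eq_big_seq => -[a b]; rewrite mem_splits => /eqP ->.
rewrite -(big_allpairs (F := fun p => (f p.1 * g p.2) *: F (p.1 ++ p.2))).
apply: sum_splits; first exact: fset_uniq.
- by apply: allpairs_uniq; rewrite ?fset_uniq // => -[? ?] [? ?] _ _ [-> ->].
- by move=> p /allpairsP[[a b] [fa gb ->]]; rewrite in_imfset2.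
case=> a b /allpairsP abNfg.
have [->|fa] := eqVneq (f a) 0; first by rewrite mul0r scale0r.
have [->|gb] := eqVneq (g b) 0; first by rewrite mulr0 scale0r.
by case: abNfg; exists (a, b); rewrite ?mem_finsupp.
Qed.

End FreeAlgebra.

Section Walks.
Variables (X : choiceType) (Q : lquiver X).
Implicit Types (u v w : qV Q) (p q : seq (qE Q)).

Lemma qwalk_cat u v w p q : qwalk v w p -> qwalk u v q -> qwalk u w (p ++ q).
Proof.
elim: p w => [|e p IHp] w /=; first by move=> ->.
by move=> [tw Wp] Wq; split; last exact: IHp Wq.
Qed.

Lemma in_sigma_mono_cat u v w (a b : seq X) :
  in_sigma_mono a v w -> in_sigma_mono b u v -> in_sigma_mono (a ++ b) u w.
Proof.
move=> [p [Wp <-]] [q [Wq <-]].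
by exists (p ++ q); split; [exact: qwalk_cat Wp Wq | exact: map_cat].
Qed.

Lemma in_KXvw_mul (K : fieldType) u v w (f g : ncpoly K X) :
  in_KXvw v w f -> in_KXvw u v g -> in_KXvw u w (ncmul f g).
Proof.
move=> Hf Hg m /(fsubsetP (finsupp_ncmul f g)) /imfset2P[a fa [b gb ->]].
exact: in_sigma_mono_cat (Hf a fa) (Hg b gb).
Qed.

End Walks.

Section Representation.
Variables (K : fieldType) (X : choiceType) (Q : lquiver X).
Variable VS : qV Q -> lmodType K.
Variable phi : forall e : qE Q, {linear VS (qs e) -> VS (qt e)}.
Implicit Types (u v w : qV Q) (p q : seq (qE Q)).
Local Notation path_map := (@Defs.path_map K X Q VS phi).

Lemma path_map_cat u v w p q (x : VS u) : qwalk v w p ->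
  path_map (p ++ q) u w x = path_map p v w (path_map q u v x).
Proof.
elim: p w => [|e p IHp] w /= => [<- | [_ /IHp -> //]].
by case: eqP => // vv; rewrite (eq_irrelevance vv erefl).
Qed.

Lemma path_map_is_linear p v w : linear (path_map p v w).
Proof.
move=> a x y; elim: p w => [|e p IHp] w /=.
  by case: eqP => [vw | _]; [case: w / vw | rewrite scaler0 addr0].
by case: eqP => [tw | _]; [case: w / tw; rewrite /= IHp linearP | rewrite scaler0 addr0].
Qed.

HB.instance Definition _ v w (m : seq X) :=
  GRing.isLinear.Build K (VS v) (VS w) *:%R (mono_map phi v w m)
    (@path_map_is_linear _ v w).

Hypothesis Hcons : consistent phi.

(* [consistent] only speaks of nonempty paths; equal labels force an empty
   path to be compared with an empty one. *)
Lemma consistent_path_map v w p q :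
  qwalk v w p -> qwalk v w q -> qlabel p = qlabel q -> path_map p v w = path_map q v w.
Proof. by case: p q => [|e p] [|d q] //; apply: Hcons. Qed.

Lemma mono_mapE v w p : qwalk v w p -> mono_map phi v w (qlabel p) = path_map p v w.
Proof.
move=> Wp; rewrite /mono_map.
have [] := epsilon_spec (inhabits [::])
  (fun q => qwalk v w q /\ qlabel q = qlabel p) (ex_intro _ p (conj Wp erefl)).
by move=> We Le; apply: consistent_path_map We Wp Le.
Qed.

Lemma mono_map_cat u v w (a b : seq X) (x : VS u) :
  in_sigma_mono a v w -> in_sigma_mono b u v ->
  mono_map phi u w (a ++ b) x = mono_map phi v w a (mono_map phi u v b x).
Proof.
move=> [p [Wp <-]] [q [Wq <-]].
have Wpq := qwalk_cat Wp Wq.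
by rewrite -map_cat !mono_mapE //; apply: path_map_cat.
Qed.

End Representation.

Theorem lemma5p6 (K : fieldType) (X : choiceType) (Q : lquiver X)
  (VS : qV Q -> lmodType K)
  (phi : forall e : qE Q, {linear VS (qs e) -> VS (qt e)})
  (Hcons : consistent phi)
  (u v w : qV Q) (f g : ncpoly K X) :
  in_KXvw v w f -> in_KXvw u v g ->
  in_KXvw u w (ncmul f g) /\
  phi_vw phi u w (ncmul f g) = (phi_vw phi v w f \o phi_vw phi u v g)%FUN.
Proof.
move=> Hf Hg; split; first exact: in_KXvw_mul Hf Hg.
apply: functional_extensionality => x; rewrite /phi_vw /ncsupp sum_ncmul /=.
apply: eq_big_seq => a fa; rewrite linear_sum scaler_sumr.
apply: eq_big_seq => b gb.
by rewrite linearZ scalerA (mono_map_cat Hcons _ (Hf a fa) (Hg b gb)).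
Qed.
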